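(* Let $(\Gamma,M)$ be an E-GCM graph on $n\ge3$ nodes whose underlying graph $\Gamma$ is a loop (the nodes can be numbered $\gamma_1,\dots,\gamma_n$ so that each $\gamma_i$ is adjacent exactly to $\gamma_{i-1}$ and $\gamma_{i+1}$, indices mod $n$), and such that $M_{ij}M_{ji}=1$ for every pair of adjacent nodes. Then $(\Gamma,M)$ is not admissible.
   Context: E-GCM $M=(M_{ij})_{i,j\in I_n}$: real, $M_{ii}=2$, $M_{ij}\le0$ ($i\ne j$), $M_{ij}\ne0\iff M_{ji}\ne0$, nonzero $M_{ij}M_{ji}$ either $\ge4$ or $=4\cos^2(\pi/m)$ with $m\ge3$ integer; E-GCM graph: nodes $\gamma_i$, adjacent iff $M_{ij}\ne0$. Positions $\lambda\in\mathbb{R}^n$; firing $\gamma_i$ (allowed iff $\lambda_i>0$) replaces $\lambda_j$ by $\lambda_j-M_{ij}\lambda_i$. Numbers game: fire nodes with positive population while any exist; a game sequence is convergent if finite. A connected E-GCM graph is admissible if some nonzero position with all $\lambda_i\ge0$ has a convergent game sequence. *)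

From Stdlib Require Import Reals Lra Lia List.
Open Scope R_scope.

(* An n x n real matrix, entries M i j for i j < n (other values irrelevant). *)

Definition is_EGCM (n : nat) (M : nat -> nat -> R) : Prop :=
  (forall i, (i < n)%nat -> M i i = 2) /\
  (forall i j, (i < n)%nat -> (j < n)%nat -> i <> j -> M i j <= 0) /\
  (forall i j, (i < n)%nat -> (j < n)%nat -> (M i j <> 0 <-> M j i <> 0)) /\
  (forall i j, (i < n)%nat -> (j < n)%nat -> i <> j -> M i j * M j i <> 0 ->
      M i j * M j i >= 4 \/
      exists m : nat, (3 <= m)%nat /\ M i j * M j i = 4 * (cos (PI / INR m))^2).

Definition adjacent (M : nat -> nat -> R) (i j : nat) : Prop :=
  i <> j /\ M i j <> 0.

Definition is_loop (n : nat) (M : nat -> nat -> R) : Prop :=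
  exists sigma : nat -> nat,
    (forall i, (i < n)%nat -> (sigma i < n)%nat) /\
    (forall i j, (i < n)%nat -> (j < n)%nat -> sigma i = sigma j -> i = j) /\
    (forall i j, (i < n)%nat -> (j < n)%nat ->
       (adjacent M (sigma i) (sigma j) <->
        (j = Nat.modulo (S i) n \/ i = Nat.modulo (S j) n))).

Definition fire (M : nat -> nat -> R) (lam : nat -> R) (i : nat) : nat -> R :=
  fun j => lam j - M i j * lam i.

Fixpoint legal (n : nat) (M : nat -> nat -> R) (lam : nat -> R) (s : list nat) : Prop :=
  match s with
  | nil => True
  | i :: s' => (i < n)%nat /\ 0 < lam i /\ legal n M (fire M lam i) s'
  end.

Fixpoint play (M : nat -> nat -> R) (lam : nat -> R) (s : list nat) : nat -> R :=
  match s with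
  | nil => lam
  | i :: s' => play M (fire M lam i) s'
  end.

Definition terminal (n : nat) (lam : nat -> R) : Prop :=
  forall i, (i < n)%nat -> lam i <= 0.

Definition has_convergent_game (n : nat) (M : nat -> nat -> R) (lam : nat -> R) : Prop :=
  exists s : list nat, legal n M lam s /\ terminal n (play M lam s).

Definition admissible (n : nat) (M : nat -> nat -> R) : Prop :=
  exists lam : nat -> R,
    (forall i, (i < n)%nat -> 0 <= lam i) /\
    (exists i, (i < n)%nat /\ lam i <> 0) /\
    has_convergent_game n M lam.

(* Number the loop as gamma_0, ..., gamma_(n-1) and put a_k := -M(gamma_k, gamma_(k+1)) > 0, so
   that M(gamma_(k+1), gamma_k) = -1/a_k.  With c the geometric mean of the a_k, the weights
   y_k := c^k / (a_0 ... a_(k-1)) close up around the loop and satisfy y_(k+1) a_k = c y_k; hence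
   (M y)_k = y_k (2 - c - 1/c) <= 0 at every node.  Firing a node i changes the linear functional
   lambda |-> sum_k y_k lambda_k by -lambda_i (M y)_i >= 0, so this functional never decreases
   along a game.  It is positive on a nonzero nonnegative start and nonpositive on a terminal
   position, so no such start has a convergent game. *)

From Stdlib Require Import Reals Lra Lia FinFun.
Open Scope R_scope.

Fixpoint sum_lt (f : nat -> R) (m : nat) : R :=
  match m with O => 0 | S m' => sum_lt f m' + f m' end.

Fixpoint prod_lt (f : nat -> R) (m : nat) : R :=
  match m with O => 1 | S m' => prod_lt f m' * f m' end.

Lemma sum_lt_ext f g m :
  (forall k, (k < m)%nat -> f k = g k) -> sum_lt f m = sum_lt g m.
Proof.
  induction m as [|m IH]; intros Hfg; simpl; [reflexivity|].
  rewrite IH, Hfg; [reflexivity | lia | intros; apply Hfg; lia].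
Qed.

Lemma sum_lt_plus f g m : sum_lt (fun k => f k + g k) m = sum_lt f m + sum_lt g m.
Proof. induction m as [|m IH]; simpl; [lra|]. rewrite IH; ring. Qed.

Lemma sum_lt_scal c f m : sum_lt (fun k => c * f k) m = c * sum_lt f m.
Proof. induction m as [|m IH]; simpl; [ring|]. rewrite IH; ring. Qed.

Lemma sum_lt_zero f m : (forall k, (k < m)%nat -> f k = 0) -> sum_lt f m = 0.
Proof.
  induction m as [|m IH]; intros Hf; simpl; [reflexivity|].
  rewrite IH, Hf; [ring | lia | intros; apply Hf; lia].
Qed.

Lemma sum_lt_nonneg f m : (forall k, (k < m)%nat -> 0 <= f k) -> 0 <= sum_lt f m.
Proof.
  induction m as [|m IH]; intros Hf; simpl; [lra|].
  assert (0 <= sum_lt f m) by (apply IH; intros; apply Hf; lia).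
  assert (0 <= f m) by (apply Hf; lia).
  lra.
Qed.

Lemma sum_lt_nonpos f m : (forall k, (k < m)%nat -> f k <= 0) -> sum_lt f m <= 0.
Proof.
  induction m as [|m IH]; intros Hf; simpl; [lra|].
  assert (sum_lt f m <= 0) by (apply IH; intros; apply Hf; lia).
  assert (f m <= 0) by (apply Hf; lia).
  lra.
Qed.

Lemma sum_lt_split_at f m a :
  (a < m)%nat -> sum_lt f m = f a + sum_lt (fun k => if Nat.eqb k a then 0 else f k) m.
Proof.
  induction m as [|m IH]; intros Ha; simpl; [lia|].
  destruct (Nat.eqb_spec m a) as [<-|Hma].
  - rewrite (sum_lt_ext (fun k => if Nat.eqb k m then 0 else f k) f m); [ring|].
    intros k Hk; destruct (Nat.eqb_spec k m); [lia | reflexivity].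
  - rewrite IH by lia; ring.
Qed.

Lemma sum_lt_pos f m a :
  (forall k, (k < m)%nat -> 0 <= f k) -> (a < m)%nat -> 0 < f a -> 0 < sum_lt f m.
Proof.
  intros Hf Ha Hfa. rewrite (sum_lt_split_at f m a Ha).
  enough (0 <= sum_lt (fun k => if Nat.eqb k a then 0 else f k) m) by lra.
  apply sum_lt_nonneg; intros k Hk; destruct (Nat.eqb k a); [lra | auto].
Qed.

Lemma sum_lt_three_support f m a b c :
  (a < m)%nat -> (b < m)%nat -> (c < m)%nat -> a <> b -> a <> c -> b <> c ->
  (forall k, (k < m)%nat -> k <> a -> k <> b -> k <> c -> f k = 0) ->
  sum_lt f m = f a + f b + f c.
Proof.
  intros Ha Hb Hc Hab Hac Hbc Hf.
  rewrite (sum_lt_split_at f m a Ha), (sum_lt_split_at _ m b Hb), (sum_lt_split_at _ m c Hc).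
  rewrite (proj2 (Nat.eqb_neq b a)), (proj2 (Nat.eqb_neq c b)), (proj2 (Nat.eqb_neq c a))
    by congruence.
  rewrite sum_lt_zero; [ring|].
  intros k Hk.
  destruct (Nat.eqb_spec k c); [reflexivity|].
  destruct (Nat.eqb_spec k b); [reflexivity|].
  destruct (Nat.eqb_spec k a); [reflexivity|].
  auto.
Qed.

Lemma prod_lt_pos f m : (forall k, (k < m)%nat -> 0 < f k) -> 0 < prod_lt f m.
Proof.
  induction m as [|m IH]; intros Hf; simpl; [lra|].
  apply Rmult_lt_0_compat; [apply IH; intros; apply Hf | apply Hf]; lia.
Qed.

Section Potential.

Variables (n : nat) (M : nat -> nat -> R) (w : nat -> R).

Definition potential (lam : nat -> R) : R := sum_lt (fun j => w j * lam j) n.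

Definition mat_vec (i : nat) : R := sum_lt (fun j => M i j * w j) n.

Lemma potential_fire lam i :
  potential (fire M lam i) = potential lam - lam i * mat_vec i.
Proof.
  unfold potential, mat_vec, fire.
  rewrite (sum_lt_ext _ (fun j => w j * lam j + - lam i * (M i j * w j))) by (intros; ring).
  rewrite sum_lt_plus, sum_lt_scal; ring.
Qed.

Hypothesis w_pos : forall j, (j < n)%nat -> 0 < w j.
Hypothesis mat_vec_nonpos : forall i, (i < n)%nat -> mat_vec i <= 0.

Lemma potential_play_ge lam s : legal n M lam s -> potential lam <= potential (play M lam s).
Proof.
  revert lam; induction s as [|i s IH]; intros lam Hs; simpl; [lra|].
  destruct Hs as [Hi [Hlam Hs]].
  specialize (IH _ Hs). rewrite potential_fire in IH.
  specialize (mat_vec_nonpos i Hi). nra.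
Qed.

Theorem not_admissible_of_mat_vec_nonpos : ~ admissible n M.
Proof.
  intros [lam [Hlam [[i [Hi Hlami]] [s [Hs Hterm]]]]].
  assert (Hstart : 0 < potential lam).
  { apply (sum_lt_pos _ _ i); [| exact Hi |].
    - intros j Hj; specialize (w_pos j Hj); specialize (Hlam j Hj); nra.
    - specialize (w_pos i Hi); specialize (Hlam i Hi).
      apply Rmult_lt_0_compat; lra. }
  assert (Hend : potential (play M lam s) <= 0).
  { apply sum_lt_nonpos; intros j Hj.
    specialize (w_pos j Hj); specialize (Hterm j Hj); nra. }
  pose proof (potential_play_ge lam s Hs); lra.
Qed.

End Potential.

Section CyclicIndex.

Variable n : nat.

Definition cyc_succ (k : nat) : nat := Nat.modulo (S k) n.

Definition cyc_pred (k : nat) : nat := if Nat.eqb k 0 then (n - 1)%nat else (k - 1)%nat.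

Lemma cyc_succ_eq k : (k < n)%nat -> cyc_succ k = if Nat.eqb (S k) n then 0%nat else S k.
Proof.
  intros Hk; unfold cyc_succ.
  destruct (Nat.eqb_spec (S k) n) as [<-|Hne].
  - apply Nat.Div0.mod_same.
  - apply Nat.mod_small; lia.
Qed.

Ltac cyc_cases :=
  unfold cyc_pred;
  repeat match goal with |- context [Nat.eqb ?x ?y] => destruct (Nat.eqb_spec x y) end;
  repeat rewrite cyc_succ_eq by lia;
  repeat match goal with |- context [Nat.eqb ?x ?y] => destruct (Nat.eqb_spec x y) end;
  lia.

Lemma cyc_succ_lt k : (k < n)%nat -> (cyc_succ k < n)%nat.
Proof. intros; cyc_cases. Qed.

Lemma cyc_pred_lt k : (k < n)%nat -> (cyc_pred k < n)%nat.
Proof. intros; cyc_cases. Qed.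

Lemma cyc_succ_pred k : (k < n)%nat -> cyc_succ (cyc_pred k) = k.
Proof. intros; cyc_cases. Qed.

Lemma cyc_succ_inj k l : (k < n)%nat -> (l < n)%nat -> cyc_succ k = cyc_succ l -> k = l.
Proof.
  intros Hk Hl; rewrite !cyc_succ_eq by lia.
  destruct (Nat.eqb_spec (S k) n), (Nat.eqb_spec (S l) n); lia.
Qed.

Lemma cyc_neighbours_distinct k :
  (3 <= n)%nat -> (k < n)%nat ->
  cyc_succ k <> k /\ cyc_pred k <> k /\ cyc_pred k <> cyc_succ k.
Proof. intros; split; [|split]; cyc_cases. Qed.

End CyclicIndex.

Lemma cyclic_balancing_weights n (a : nat -> R) :
  (0 < n)%nat -> (forall k, (k < n)%nat -> 0 < a k) ->
  exists c y, 0 < c /\ (forall k, (k < n)%nat -> 0 < y k) /\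
    (forall k, (k < n)%nat -> y (cyc_succ n k) * a k = c * y k).
Proof.
  intros Hn Ha.
  assert (Hprod : forall k, (k <= n)%nat -> 0 < prod_lt a k)
    by (intros k Hk; apply prod_lt_pos; intros; apply Ha; lia).
  set (c := Rpower (prod_lt a n) (/ INR n)).
  assert (Hc : 0 < c) by apply exp_pos.
  assert (Hcn : c ^ n = prod_lt a n).
  { unfold c. rewrite <- Rpower_pow, Rpower_mult, Rinv_l, Rpower_1 by (auto; apply not_0_INR; lia).
    reflexivity. }
  exists c, (fun k => c ^ k / prod_lt a k).
  split; [exact Hc | split].
  - intros k Hk. apply Rdiv_lt_0_compat; [apply pow_lt, Hc | apply Hprod; lia].
  - intros k Hk. assert (0 < prod_lt a k) by (apply Hprod; lia). assert (0 < a k) by auto.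
    rewrite cyc_succ_eq by exact Hk.
    destruct (Nat.eqb_spec (S k) n) as [Hkn|_].
    + rewrite <- Hkn in Hcn; simpl in Hcn |- *.
      replace (a k) with (c * c ^ k / prod_lt a k) by (rewrite Hcn; field; lra).
      field; lra.
    + simpl. field; lra.
Qed.

Section LoopWeights.

Variables (n : nat) (M : nat -> nat -> R) (sigma tau : nat -> nat).

Hypothesis n_ge3 : (3 <= n)%nat.
Hypothesis M_diag : forall i, (i < n)%nat -> M i i = 2.
Hypothesis M_offdiag : forall i j, (i < n)%nat -> (j < n)%nat -> i <> j -> M i j <= 0.
Hypothesis M_adjacent_prod :
  forall i j, (i < n)%nat -> (j < n)%nat -> adjacent M i j -> M i j * M j i = 1.
Hypothesis sigma_lt : forall k, (k < n)%nat -> (sigma k < n)%nat.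
Hypothesis tau_lt : forall j, (j < n)%nat -> (tau j < n)%nat.
Hypothesis tau_sigma : forall k, (k < n)%nat -> tau (sigma k) = k.
Hypothesis sigma_tau : forall j, (j < n)%nat -> sigma (tau j) = j.
Hypothesis sigma_adjacent : forall k l, (k < n)%nat -> (l < n)%nat ->
  (adjacent M (sigma k) (sigma l) <-> l = cyc_succ n k \/ k = cyc_succ n l).

Let a k := - M (sigma k) (sigma (cyc_succ n k)).

Lemma sigma_inj k l : (k < n)%nat -> (l < n)%nat -> sigma k = sigma l -> k = l.
Proof. intros Hk Hl E. rewrite <- (tau_sigma k Hk), <- (tau_sigma l Hl), E. reflexivity. Qed.

Lemma loop_edge_pos k : (k < n)%nat -> 0 < a k.
Proof.
  intros Hk.
  assert (Hsk := cyc_succ_lt n k Hk).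
  destruct (proj2 (sigma_adjacent k _ Hk Hsk) (or_introl eq_refl)) as [Hne Hnz].
  pose proof (M_offdiag _ _ (sigma_lt k Hk) (sigma_lt _ Hsk) Hne).
  unfold a; lra.
Qed.

Lemma M_to_pred k :
  (k < n)%nat -> M (sigma k) (sigma (cyc_pred n k)) = - / a (cyc_pred n k).
Proof.
  intros Hk. set (p := cyc_pred n k).
  assert (Hp : (p < n)%nat) by (apply cyc_pred_lt; lia).
  assert (Hsp : cyc_succ n p = k) by (apply cyc_succ_pred; lia).
  assert (Hprod : M (sigma k) (sigma p) * M (sigma p) (sigma k) = 1).
  { apply M_adjacent_prod; [apply sigma_lt; lia .. |].
    apply sigma_adjacent; auto. }
  pose proof (loop_edge_pos p Hp) as Hap.
  unfold a in *; rewrite Hsp in *.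
  field_simplify_eq; [lra | lra].
Qed.

Lemma M_off_neighbours k j :
  (k < n)%nat -> (j < n)%nat ->
  j <> sigma k -> j <> sigma (cyc_succ n k) -> j <> sigma (cyc_pred n k) ->
  M (sigma k) j = 0.
Proof.
  intros Hk Hj Hjk Hjs Hjp.
  destruct (Req_dec (M (sigma k) j) 0) as [|Hnz]; [assumption | exfalso].
  rewrite <- (sigma_tau j Hj) in Hjk, Hjs, Hjp, Hnz.
  destruct (proj1 (sigma_adjacent k (tau j) Hk (tau_lt j Hj)) (conj (not_eq_sym Hjk) Hnz))
    as [E|E].
  - exact (Hjs (f_equal sigma E)).
  - apply Hjp; f_equal.
    apply (cyc_succ_inj n); [apply tau_lt; lia | apply cyc_pred_lt; lia |].
    rewrite cyc_succ_pred by lia. congruence.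
Qed.

Lemma exists_pos_weight_mat_vec_nonpos :
  exists w, (forall j, (j < n)%nat -> 0 < w j) /\ (forall i, (i < n)%nat -> mat_vec n M w i <= 0).
Proof.
  destruct (cyclic_balancing_weights n a ltac:(lia) loop_edge_pos) as [c [y [Hc [Hy Hbal]]]].
  exists (fun j => y (tau j)). split; [intros j Hj; apply Hy, tau_lt, Hj|].
  intros i Hi. rewrite <- (sigma_tau i Hi). set (k := tau i).
  assert (Hk : (k < n)%nat) by (apply tau_lt, Hi).
  set (p := cyc_pred n k). set (q := cyc_succ n k).
  assert (Hp : (p < n)%nat) by (apply cyc_pred_lt; lia).
  assert (Hq : (q < n)%nat) by (apply cyc_succ_lt; lia).
  destruct (cyc_neighbours_distinct n k n_ge3 Hk) as [Hqk [Hpk Hpq]]; fold p q in Hqk, Hpk, Hpq.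
  unfold mat_vec.
  rewrite (sum_lt_three_support _ n (sigma k) (sigma q) (sigma p)); try (apply sigma_lt; lia).
  2-4: intro E; apply sigma_inj in E; lia.
  2: { intros j Hj H1 H2 H3. rewrite (M_off_neighbours k j); auto; ring. }
  rewrite !tau_sigma, M_diag, M_to_pred by (try apply sigma_lt; lia). fold p.
  assert (Hyk := Hy k Hk).
  assert (Hap := loop_edge_pos p Hp).
  assert (Hq_rel : - M (sigma k) (sigma q) * y q = c * y k) by (rewrite <- (Hbal k Hk); unfold a, q; ring).
  assert (Hp_rel : y k * a p = c * y p) by (rewrite <- (Hbal p Hp); unfold p; rewrite cyc_succ_pred by lia; reflexivity).
  assert (Hp_term : - / a p * y p = - y k / c) by (field_simplify_eq; lra).
  assert (Hsq : 0 <= y k * (c - 1) ^ 2 / c)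
    by (unfold Rdiv; apply Rmult_le_pos;
        [apply Rmult_le_pos; [lra | apply pow2_ge_0] | left; apply Rinv_0_lt_compat, Hc]).
  replace (2 * y k + M (sigma k) (sigma q) * y q + - / a p * y p) with (- (y k * (c - 1) ^ 2 / c))
    by (rewrite Hp_term; field_simplify_eq; [nra | lra]).
  lra.
Qed.

End LoopWeights.

Theorem lemma4p14 (n : nat) (M : nat -> nat -> R) :
  (3 <= n)%nat ->
  is_EGCM n M ->
  is_loop n M ->
  (forall i j, (i < n)%nat -> (j < n)%nat -> adjacent M i j -> M i j * M j i = 1) ->
  ~ admissible n M.
Proof.
  intros Hn [Hdiag [Hoff _]] [sigma [Hsigma_lt [Hsigma_inj Hadj]]] Hprod.
  assert (Hsurj : bSurjective n sigma) by (apply bInjective_bSurjective; assumption).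
  destruct (bSurjective_bBijective Hsigma_lt Hsurj) as [tau [Htau_lt Hinv]].
  destruct (exists_pos_weight_mat_vec_nonpos n M sigma tau Hn Hdiag Hoff Hprod Hsigma_lt Htau_lt
              (fun k Hk => proj1 (Hinv k Hk)) (fun j Hj => proj2 (Hinv j Hj)) Hadj)
    as [w [Hw HMw]].
  exact (not_admissible_of_mat_vec_nonpos n M w Hw HMw).
Qed.
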